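(* Let $\pi_2$ be the five-dimensional complex associative algebra with basis $e_1,\dots,e_5$ and nonzero products $e_1e_1=e_2$, $e_1e_2=e_2e_1=e_3$, $e_1e_4=e_4e_1=e_5$, $e_4e_4=e_5$ (all other products of basis elements are zero). A linear operator on $\pi_2$ is a local automorphism if and only if its matrix has the form $$\begin{pmatrix} b_{11} & 0 & 0 & 0 & 0 \\ b_{21} & b_{22} & 0 & 0 & 0 \\ b_{31} & b_{32} & b_{33} & b_{34} & 0 \\ b_{41} & 0 & 0 & b_{41}+b_{11} & 0 \\ b_{51} & b_{52} & 0 & b_{54} & b_{22}+b_{52} \end{pmatrix},$$ where $b_{11},b_{21},b_{22},b_{31},b_{32},b_{33},b_{34},b_{41},b_{51},b_{52},b_{54}\in\mathbb{C}$ satisfy $b_{11}b_{22}b_{33}(b_{41}+b_{11})(b_{22}+b_{52})\neq 0$.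
   Context: The matrix of a linear operator $T$ is taken with respect to the basis $e_1,\dots,e_5$, with the $j$-th column giving the coordinates of $T(e_j)$ (so $\overline{T(x)}=B\bar{x}$ for coordinate columns). An automorphism of an algebra $A$ is a bijective linear map $\Phi$ with $\Phi(xy)=\Phi(x)\Phi(y)$ for all $x,y$. A linear map $\Phi:A\to A$ is a local automorphism if for every $\nu\in A$ there is an automorphism $\varphi_\nu$ of $A$ (depending on $\nu$) with $\Phi(\nu)=\varphi_\nu(\nu)$. *)

From HB Require Import structures.
From mathcomp Require Import all_boot all_order all_algebra.
From mathcomp Require Import complex.
From mathcomp Require Import Rstruct.
Set Implicit Arguments. Unset Strict Implicit. Unset Printing Implicit Defensive.
Import Order.TTheory GRing.Theory Num.Theory.
Local Open Scope ring_scope.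

Definition C : fieldType := (Rdefinitions.R)[i].

(* Elements of pi_2 are coordinate columns w.r.t. e_1,...,e_5
   (index k : 'I_5 stands for e_(k+1)). *)
Definition basis_vec (k : 'I_5) : 'cV[C]_5 := delta_mx k 0.

Local Close Scope ring_scope.
Definition eprod (i j : 'I_5) : 'cV[C]_5 :=
  match nat_of_ord i, nat_of_ord j with
  | 0, 0 => basis_vec (inord 1)
  | 0, 1 | 1, 0 => basis_vec (inord 2)
  | 0, 3 | 3, 0 | 3, 3 => basis_vec (inord 4)
  | _, _ => 0%R
  end.

Local Open Scope ring_scope.
Definition pi2_mul (x y : 'cV[C]_5) : 'cV[C]_5 :=
  \sum_(i < 5) \sum_(j < 5) (x i 0 * y j 0) *: eprod i j.

Definition is_automorphism (A : 'M[C]_5) : Prop :=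
  A \in unitmx /\ forall x y : 'cV[C]_5, A *m pi2_mul x y = pi2_mul (A *m x) (A *m y).

Definition is_local_automorphism (B : 'M[C]_5) : Prop :=
  forall v : 'cV[C]_5, exists A : 'M[C]_5, is_automorphism A /\ B *m v = A *m v.

(* The matrix form in the theorem (rows i, columns j, 0-based). *)
Local Close Scope ring_scope.
Definition pi2_form (b11 b21 b22 b31 b32 b33 b34 b41 b51 b52 b54 : C) : 'M[C]_5 :=
  \matrix_(i < 5, j < 5)
   match nat_of_ord i, nat_of_ord j with
   | 0, 0 => b11
   | 1, 0 => b21 | 1, 1 => b22
   | 2, 0 => b31 | 2, 1 => b32 | 2, 2 => b33 | 2, 3 => b34
   | 3, 0 => b41 | 3, 3 => (b41 + b11)%R
   | 4, 0 => b51 | 4, 1 => b52 | 4, 3 => b54 | 4, 4 => (b22 + b52)%R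
   | _, _ => 0%R
   end.

(** An automorphism is determined by the image [a0 e1 + ... + a4 e5] of the
    generator [e1] together with the image of [e4], which must be
    [(a0 + a3) e4 + c2 e3 + c4 e5]; as a matrix it is an invertible instance of
    [pi2_form].  Hence a local automorphism has, column by column, the zero
    pattern and nonzero diagonal of [pi2_form], and testing it on [e1 - e4] and
    [e2 - e5] yields the two linear relations on the diagonal.  Conversely,
    given an invertible [B] of that shape and a vector [v], one solves
    [B v = A v] for an automorphism [A], choosing the parameters according to
    which of the coordinates of [v] along [e1], [e4], [e2] vanish; the only
    non-linear constraints are square and cube roots, which exist over [C]. *)

From HB Require Import structures.
From mathcomp Require Import all_boot all_order all_algebra.
From mathcomp Require Import complex.
From mathcomp Require Import Rstruct.
From mathcomp Require Import ring perm.
Set Implicit Arguments.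
Unset Strict Implicit.
Unset Printing Implicit Defensive.
Import GRing.Theory Num.Theory.
Local Open Scope ring_scope.

Notation i0 := (@Ordinal 5 0 isT).
Notation i1 := (@Ordinal 5 1 isT).
Notation i2 := (@Ordinal 5 2 isT).
Notation i3 := (@Ordinal 5 3 isT).
Notation i4 := (@Ordinal 5 4 isT).

Lemma ord5_ind (P : 'I_5 -> Prop) :
  P i0 -> P i1 -> P i2 -> P i3 -> P i4 -> forall i, P i.
Proof.
move=> P0 P1 P2 P3 P4 [[|[|[|[|[|i]]]]] lti] //.
all: by rewrite (bool_irrelevance lti isT).
Qed.

Lemma big_ord5 (R : Type) (idx : R) (op : Monoid.law idx) (F : 'I_5 -> R) :
  \big[op/idx]_(k < 5) F k = op (op (op (op (F i0) (F i1)) (F i2)) (F i3)) (F i4).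
Proof.
rewrite !big_ord_recl big_ord0 Monoid.mulm1 !Monoid.mulmA.
by congr (op (op (op (op (F _) (F _)) (F _)) (F _)) (F _)); apply: val_inj.
Qed.

Lemma eq_inord n (k : 'I_n.+1) m : (m <= n)%N -> (k == inord m) = (val k == m).
Proof. by move=> le_mn; rewrite -(inj_eq val_inj) /= inordK. Qed.

Definition vec5 {R : nmodType} (x0 x1 x2 x3 x4 : R) : 'cV[R]_5 :=
  \col_k [:: x0; x1; x2; x3; x4]`_k.

Lemma vec5E (R : nmodType) (x : 'cV[R]_5) :
  x = vec5 (x i0 0) (x i1 0) (x i2 0) (x i3 0) (x i4 0).
Proof. by apply/matrixP; apply: ord5_ind => j; rewrite !mxE ord1. Qed.

Lemma vec5_inj (R : nmodType) (x0 x1 x2 x3 x4 y0 y1 y2 y3 y4 : R) :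
  vec5 x0 x1 x2 x3 x4 = vec5 y0 y1 y2 y3 y4 ->
  [/\ x0 = y0, x1 = y1, x2 = y2, x3 = y3 & x4 = y4].
Proof.
move=> /matrixP xy.
by split; [move: (xy i0 0) | move: (xy i1 0) | move: (xy i2 0) | move: (xy i3 0)
          | move: (xy i4 0)]; rewrite !mxE.
Qed.

Lemma vec50 (R : nmodType) : vec5 0 0 0 0 0 = 0 :> 'cV[R]_5.
Proof. by apply/matrixP; apply: ord5_ind => j; rewrite !mxE. Qed.

Lemma mulmx_vec5_entry (R : comPzRingType) (A : 'M[R]_5) (v0 v1 v2 v3 v4 : R) i :
  (A *m vec5 v0 v1 v2 v3 v4) i 0 =
  A i i0 * v0 + A i i1 * v1 + A i i2 * v2 + A i i3 * v3 + A i i4 * v4.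
Proof. by rewrite mxE big_ord5 !mxE. Qed.

Lemma pi2_mul_vec5 x0 x1 x2 x3 x4 y0 y1 y2 y3 y4 :
  pi2_mul (vec5 x0 x1 x2 x3 x4) (vec5 y0 y1 y2 y3 y4) =
  vec5 0 (x0 * y0) (x0 * y1 + x1 * y0) 0 (x0 * y3 + x3 * y0 + x3 * y3).
Proof.
apply/matrixP => k j; rewrite ord1 /pi2_mul summxE big_ord5 !summxE !big_ord5.
rewrite !mxE /eprod /basis_vec /= !eq_inord // !andbT !mulr0 !addr0.
by move: k; apply: ord5_ind; rewrite /= ?mulr1 ?mulr0 ?addr0 ?addrA ?add0r.
Qed.

Lemma mul_pi2_form_vec5 b11 b21 b22 b31 b32 b33 b34 b41 b51 b52 b54 v0 v1 v2 v3 v4 :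
  pi2_form b11 b21 b22 b31 b32 b33 b34 b41 b51 b52 b54 *m vec5 v0 v1 v2 v3 v4 =
  vec5 (b11 * v0) (b21 * v0 + b22 * v1) (b31 * v0 + b32 * v1 + b33 * v2 + b34 * v3)
       (b41 * v0 + (b41 + b11) * v3) (b51 * v0 + b52 * v1 + b54 * v3 + (b22 + b52) * v4).
Proof.
by apply/matrixP; apply: ord5_ind => j; rewrite ord1 mxE big_ord5 !mxE /=; ring.
Qed.

(* Swapping e3 and e4 makes [pi2_form] lower triangular. *)
Lemma det_pi2_form b11 b21 b22 b31 b32 b33 b34 b41 b51 b52 b54 :
  \det (pi2_form b11 b21 b22 b31 b32 b33 b34 b41 b51 b52 b54) =
  b11 * b22 * b33 * (b41 + b11) * (b22 + b52).
Proof.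
set P := pi2_form _ _ _ _ _ _ _ _ _ _ _.
set Q := xrow i2 i3 (xcol i2 i3 P).
have -> : \det P = \det Q.
  by rewrite /Q xrowE xcolE !det_mulmx [\det P * _]mulrC det_perm signrMK.
have QE i j : Q i j = P (tperm i2 i3 i) (tperm i2 i3 j).
  by rewrite /Q /xrow /xcol /row_perm /col_perm !mxE.
rewrite det_trig; last first.
  by apply/is_trig_mxP; apply: ord5_ind; apply: ord5_ind => // _;
    rewrite QE /tperm !permE /P mxE.
by rewrite big_ord5 !QE /tperm !permE /P !mxE /=; ring.
Qed.

Lemma unitmx_pi2_form_diag b11 b21 b22 b31 b32 b33 b34 b41 b51 b52 b54 i :
  let P := pi2_form b11 b21 b22 b31 b32 b33 b34 b41 b51 b52 b54 in
  P \in unitmx -> P i i != 0.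
Proof.
rewrite /= unitmxE unitfE det_pi2_form !mulf_eq0 !negb_or.
case/andP=> /andP[/andP[/andP[nz11 nz22] nz33] nz44] nz55.
by move: i; apply: ord5_ind; rewrite mxE.
Qed.

Definition pi2_support (i j : 'I_5) : bool :=
  [|| j == i0, i == j, (i == i2) && (j <= 3)%N | (i == i4) && (j != i2)].

Lemma pi2_form_support b11 b21 b22 b31 b32 b33 b34 b41 b51 b52 b54 i j :
  ~~ pi2_support i j -> pi2_form b11 b21 b22 b31 b32 b33 b34 b41 b51 b52 b54 i j = 0.
Proof. by move: i j; apply: ord5_ind; apply: ord5_ind; rewrite mxE. Qed.

Lemma pi2_formE (B : 'M[C]_5) :
  (forall i j, ~~ pi2_support i j -> B i j = 0) ->
  B i3 i3 = B i3 i0 + B i0 i0 -> B i4 i4 = B i1 i1 + B i4 i1 ->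
  B = pi2_form (B i0 i0) (B i1 i0) (B i1 i1) (B i2 i0) (B i2 i1) (B i2 i2) (B i2 i3)
               (B i3 i0) (B i4 i0) (B i4 i1) (B i4 i3).
Proof.
move=> B0 B33 B44; apply/matrixP; apply: ord5_ind; apply: ord5_ind.
all: by rewrite mxE /= ?B33 ?B44 // B0.
Qed.

(* The image of e1 is (a0, ..., a4); those of e2 = e1 e1, e3 = e1 e2 and
   e5 = e1 e4 are the corresponding products. *)
Definition pi2_aut (a0 a1 a2 a3 a4 c2 c4 : C) : 'M[C]_5 :=
  pi2_form a0 a1 (a0 ^+ 2) a2 (2 * a0 * a1) (a0 ^+ 3) c2 a3 a4 (2 * a0 * a3 + a3 ^+ 2) c4.

Lemma pi2_aut_mul a0 a1 a2 a3 a4 c2 c4 x y :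
  let A := pi2_aut a0 a1 a2 a3 a4 c2 c4 in A *m pi2_mul x y = pi2_mul (A *m x) (A *m y).
Proof.
rewrite /= (vec5E x) (vec5E y) !mul_pi2_form_vec5 !pi2_mul_vec5 mul_pi2_form_vec5.
by congr vec5; ring.
Qed.

Lemma pi2_aut_automorphism a0 a1 a2 a3 a4 c2 c4 :
  a0 != 0 -> a0 + a3 != 0 -> is_automorphism (pi2_aut a0 a1 a2 a3 a4 c2 c4).
Proof.
move=> a0_neq0 a03_neq0; split; last exact: pi2_aut_mul.
rewrite unitmxE unitfE det_pi2_form.
have -> : a0 ^+ 2 + (2 * a0 * a3 + a3 ^+ 2) = (a0 + a3) ^+ 2 by ring.
by rewrite addrC !mulf_neq0 ?expf_neq0.
Qed.

Lemma automorphism_col_mul (A : 'M[C]_5) : is_automorphism A ->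
  [/\ pi2_mul (col i0 A) (col i0 A) = col i1 A, pi2_mul (col i0 A) (col i1 A) = col i2 A,
      pi2_mul (col i3 A) (col i1 A) = 0, pi2_mul (col i0 A) (col i3 A) = col i4 A
    & pi2_mul (col i3 A) (col i3 A) = col i4 A].
Proof.
case=> _ Amul.
have colE5 k :
    col k A = A *m vec5 (k == i0)%:R (k == i1)%:R (k == i2)%:R (k == i3)%:R (k == i4)%:R.
  apply/matrixP => i j; rewrite ord1 mulmx_vec5_entry mxE.
  by move: k; apply: ord5_ind; rewrite /= ?mulr0 ?mulr1 ?addr0 ?add0r.
by split; rewrite !colE5 -Amul pi2_mul_vec5 /=
  ?mulr0 ?mul0r ?mulr1 ?addr0 ?add0r ?vec50 ?mulmx0.
Qed.

Lemma unitmx_col_neq0 (R : comUnitRingType) n (A : 'M[R]_n) j :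
  A \in unitmx -> col j A != 0.
Proof.
move=> Aunit; apply: contraTneq isT => Aj0.
have : delta_mx j 0 = 0 :> 'cV[R]_n.
  by rewrite -(mulKmx Aunit (delta_mx j 0)) -colE Aj0 mulmx0.
by move/matrixP/(_ j 0); rewrite !mxE !eqxx => /eqP; rewrite oner_eq0.
Qed.

Lemma automorphism_pi2_aut (A : 'M[C]_5) : is_automorphism A ->
  exists a0 a1 a2 a3 a4 c2 c4, A = pi2_aut a0 a1 a2 a3 a4 c2 c4.
Proof.
move=> Aaut; have [Aunit _] := Aaut.
have [x1E x2E x31 x4E x4E'] := automorphism_col_mul Aaut.
have [a0 [a1 [a2 [a3 [a4 x0E]]]]] : exists a0 a1 a2 a3 a4, col i0 A = vec5 a0 a1 a2 a3 a4.
  by do 5 eexists; apply: vec5E.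
have [p0 [p1 [p2 [p3 [p4 x3E]]]]] : exists p0 p1 p2 p3 p4, col i3 A = vec5 p0 p1 p2 p3 p4.
  by do 5 eexists; apply: vec5E.
rewrite x0E pi2_mul_vec5 in x1E.
rewrite x0E -x1E pi2_mul_vec5 in x2E.
rewrite x3E -x1E pi2_mul_vec5 -vec50 in x31.
rewrite x0E x3E pi2_mul_vec5 in x4E.
rewrite x3E pi2_mul_vec5 in x4E'.
have a0_neq0 : a0 != 0.
  apply: contraTneq (unitmx_col_neq0 i2 Aunit) => a00.
  by rewrite -x2E a00 !(mul0r, mulr0, addr0) vec50 eqxx.
have p00 : p0 = 0.
  have [_ _ /eqP + _ _] := vec5_inj x31.
  by rewrite mulr0 addr0 !mulf_eq0 (negPf a0_neq0) !orbF => /eqP.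
subst p0.
have [_ _ a0p1 _ a03p3] := vec5_inj (etrans x4E (esym x4E')).
have p10 : p1 = 0.
  apply/eqP; move: a0p1; rewrite !(mul0r, mulr0, addr0) => /eqP.
  by rewrite mulf_eq0 (negPf a0_neq0).
subst p1.
have p3_neq0 : p3 != 0.
  apply: contraTneq (unitmx_col_neq0 i4 Aunit) => p30.
  by rewrite -x4E' p30 !(mul0r, mulr0, addr0) vec50 eqxx.
have p3E : p3 = a0 + a3.
  apply: (mulIf p3_neq0); rewrite mulrDl.
  by move: a03p3; rewrite !(mul0r, mulr0, addr0, add0r) => ->.
subst p3.
exists a0, a1, a2, a3, a4, p2, p4.
apply/matrixP => i j; have -> : A i j = col j A i 0 by rewrite mxE.
move: j i; apply: ord5_ind; rewrite ?x0E ?x3E -?x1E -?x2E -?x4E';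
by apply: ord5_ind; rewrite !mxE /=; ring.
Qed.

Section LocalAutomorphism.

Variable B : 'M[C]_5.
Hypothesis B_local : is_local_automorphism B.

Lemma local_automorphism_pi2_aut (v : 'cV[C]_5) : exists a0 a1 a2 a3 a4 c2 c4,
  let A := pi2_aut a0 a1 a2 a3 a4 c2 c4 in A \in unitmx /\ B *m v = A *m v.
Proof.
have [A [Aaut BA]] := B_local v; have [Aunit _] := Aaut.
have [a0 [a1 [a2 [a3 [a4 [c2 [c4 AE]]]]]]] := automorphism_pi2_aut Aaut.
by exists a0, a1, a2, a3, a4, c2, c4; rewrite -AE.
Qed.

Lemma local_automorphism_col j : exists a0 a1 a2 a3 a4 c2 c4,
  let A := pi2_aut a0 a1 a2 a3 a4 c2 c4 in A \in unitmx /\ forall i, B i j = A i j.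
Proof.
have [a0 [a1 [a2 [a3 [a4 [c2 [c4 [Aunit BA]]]]]]]] :=
  local_automorphism_pi2_aut (basis_vec j).
exists a0, a1, a2, a3, a4, c2, c4; split => // i.
by move: BA; rewrite -!colE => /matrixP/(_ i 0); rewrite !mxE.
Qed.

Lemma local_automorphism_support i j : ~~ pi2_support i j -> B i j = 0.
Proof.
have [a0 [a1 [a2 [a3 [a4 [c2 [c4 [_ BA]]]]]]]] := local_automorphism_col j.
by rewrite BA; apply: pi2_form_support.
Qed.

Lemma local_automorphism_diag_neq0 i : B i i != 0.
Proof.
have [a0 [a1 [a2 [a3 [a4 [c2 [c4 [Aunit BA]]]]]]]] := local_automorphism_col i.
by rewrite BA; apply: unitmx_pi2_form_diag.
Qed.

Lemma local_automorphism_entry33 : B i3 i3 = B i3 i0 + B i0 i0.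
Proof.
have [a0 [a1 [a2 [a3 [a4 [c2 [c4 [_ BA]]]]]]]] :=
  local_automorphism_pi2_aut (vec5 1 0 0 (-1) 0).
have := congr1 (fun M : 'cV[C]_5 => M i0 0) BA;
have := congr1 (fun M : 'cV[C]_5 => M i3 0) BA.
rewrite /= mul_pi2_form_vec5 !mulmx_vec5_entry !mxE /=.
rewrite (local_automorphism_support (i := i0) (j := i3)) //.
rewrite !(mul1r, mul0r, mulr1, mulr0, mulN1r, mulrN1, addr0, oppr0) => e3 ->.
by rewrite -[LHS](subKr (B i3 i0)) e3; ring.
Qed.

Lemma local_automorphism_entry44 : B i4 i4 = B i1 i1 + B i4 i1.
Proof.
have [a0 [a1 [a2 [a3 [a4 [c2 [c4 [_ BA]]]]]]]] :=
  local_automorphism_pi2_aut (vec5 0 1 0 0 (-1)).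
have := congr1 (fun M : 'cV[C]_5 => M i1 0) BA;
have := congr1 (fun M : 'cV[C]_5 => M i4 0) BA.
rewrite /= mul_pi2_form_vec5 !mulmx_vec5_entry !mxE /=.
rewrite (local_automorphism_support (i := i1) (j := i4)) //.
rewrite !(mul1r, mul0r, mulr1, mulr0, mulN1r, mulrN1, addr0, add0r, oppr0) => e4 ->.
by rewrite -[LHS](subKr (B i4 i1)) e4; ring.
Qed.

Lemma local_automorphism_pi2_form :
  exists b11 b21 b22 b31 b32 b33 b34 b41 b51 b52 b54 : C,
    b11 * b22 * b33 * (b41 + b11) * (b22 + b52) != 0 /\
    B = pi2_form b11 b21 b22 b31 b32 b33 b34 b41 b51 b52 b54.
Proof.
do 11 eexists; split; last first.
  exact: pi2_formE local_automorphism_support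
    local_automorphism_entry33 local_automorphism_entry44.
rewrite -local_automorphism_entry33 -local_automorphism_entry44.
by rewrite !mulf_neq0 ?local_automorphism_diag_neq0.
Qed.

End LocalAutomorphism.

Lemma exists_root_neq0 (F : numClosedFieldType) n (x : F) :
  (0 < n)%N -> x != 0 -> exists2 r : F, r != 0 & r ^+ n = x.
Proof.
move=> n_gt0 x_neq0; have xE : n.-root x ^+ n = x by exact: rootCK.
exists (n.-root x) => //.
by move: x_neq0; rewrite -{1}xE expf_eq0 n_gt0.
Qed.

Section InvertiblePi2Form.

Variables b11 b21 b22 b31 b32 b33 b34 b41 b51 b52 b54 : C.
Hypotheses (b11_neq0 : b11 != 0) (b22_neq0 : b22 != 0) (b33_neq0 : b33 != 0)
  (b44_neq0 : b41 + b11 != 0) (b55_neq0 : b22 + b52 != 0).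
Let P := pi2_form b11 b21 b22 b31 b32 b33 b34 b41 b51 b52 b54.

Section AgreementAtVector.

Variables v0 v1 v2 v3 v4 : C.
Let v := vec5 v0 v1 v2 v3 v4.

Let agrees_with_automorphism := exists a0 a1 a2 a3 a4 c2 c4,
  [/\ a0 != 0, a0 + a3 != 0 & P *m v = pi2_aut a0 a1 a2 a3 a4 c2 c4 *m v].

Lemma agrees_v0_neq0 : v0 != 0 -> agrees_with_automorphism.
Proof.
move=> v0_neq0; set a1 := (b21 * v0 + b22 * v1 - b11 ^+ 2 * v1) / v0.
exists b11, a1,
  ((b31 * v0 + b32 * v1 + b33 * v2 + b34 * v3 - 2 * b11 * a1 * v1 - b11 ^+ 3 * v2) / v0),
  b41,
  ((b51 * v0 + b52 * v1 + b54 * v3 + (b22 + b52) * v4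
    - (2 * b11 * b41 + b41 ^+ 2) * v1 - (b11 + b41) ^+ 2 * v4) / v0), 0, 0.
split => //; first by rewrite addrC.
by rewrite /P /v /pi2_aut !mul_pi2_form_vec5 /a1; congr vec5; field.
Qed.

Lemma agrees_v0_eq0_v3_neq0 : v0 = 0 -> v3 != 0 -> agrees_with_automorphism.
Proof.
move=> v00 v3_neq0; have [r r_neq0 rE] := exists_root_neq0 (isT : (0 < 2)%N) b22_neq0.
set a3 := b41 + b11 - r.
exists r, 0, 0, a3, 0, ((b32 * v1 + b33 * v2 + b34 * v3 - r ^+ 3 * v2) / v3),
  ((b52 * v1 + b54 * v3 + (b22 + b52) * v4 - (2 * r * a3 + a3 ^+ 2) * v1
    - (b41 + b11) ^+ 2 * v4) / v3).
split => //; first by rewrite addrC subrK.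
rewrite /P /v /pi2_aut !mul_pi2_form_vec5 /a3 v00.
by congr vec5; rewrite -?rE; field.
Qed.

(* With [v3 = 0] the parameter [c4] is of no use; the last coordinate is
   matched by choosing [a0 + a3] to be a square root of [b22 + b52]. *)
Lemma agrees_v03_eq0_v1_neq0 : v0 = 0 -> v3 = 0 -> v1 != 0 -> agrees_with_automorphism.
Proof.
move=> v00 v30 v1_neq0.
have [r r_neq0 rE] := exists_root_neq0 (isT : (0 < 2)%N) b22_neq0.
have [t t_neq0 tE] := exists_root_neq0 (isT : (0 < 2)%N) b55_neq0.
have b52E : b52 = t ^+ 2 - r ^+ 2 by rewrite tE rE addrC addKr.
exists r, ((b32 * v1 + b33 * v2 - r ^+ 3 * v2) / (2 * r * v1)), 0, (t - r), 0, 0, 0.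
split => //; first by rewrite addrC subrK.
rewrite /P /v /pi2_aut !mul_pi2_form_vec5 v00 v30.
by congr vec5; rewrite ?b52E -?rE; field; rewrite ?v1_neq0 ?r_neq0.
Qed.

Lemma agrees_v013_eq0 : v0 = 0 -> v1 = 0 -> v3 = 0 -> agrees_with_automorphism.
Proof.
move=> v00 v10 v30.
have [s s_neq0 sE] := exists_root_neq0 (isT : (0 < 3)%N) b33_neq0.
have [t t_neq0 tE] := exists_root_neq0 (isT : (0 < 2)%N) b55_neq0.
exists s, 0, 0, (t - s), 0, 0, 0.
split => //; first by rewrite addrC subrK.
rewrite /P /v /pi2_aut !mul_pi2_form_vec5 v00 v10 v30 -tE -sE.
by congr vec5; ring.
Qed.

Lemma invertible_pi2_form_agrees : agrees_with_automorphism.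
Proof.
have [v00|] := eqVneq v0 0; last exact: agrees_v0_neq0.
have [v30|] := eqVneq v3 0; last exact: agrees_v0_eq0_v3_neq0.
have [v10|] := eqVneq v1 0; last exact: agrees_v03_eq0_v1_neq0.
exact: agrees_v013_eq0.
Qed.

End AgreementAtVector.

Lemma pi2_form_local_automorphism : is_local_automorphism P.
Proof.
move=> v; rewrite (vec5E v).
have [a0 [a1 [a2 [a3 [a4 [c2 [c4 [a0_neq0 a03_neq0 Pv]]]]]]]] :=
  invertible_pi2_form_agrees (v i0 0) (v i1 0) (v i2 0) (v i3 0) (v i4 0).
by exists (pi2_aut a0 a1 a2 a3 a4 c2 c4); split => //; apply: pi2_aut_automorphism.
Qed.

End InvertiblePi2Form.

Theorem theorem3p2 (B : 'M[C]_5) :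
  is_local_automorphism B <->
  exists b11 b21 b22 b31 b32 b33 b34 b41 b51 b52 b54 : C,
    b11 * b22 * b33 * (b41 + b11) * (b22 + b52) != 0 /\
    B = pi2_form b11 b21 b22 b31 b32 b33 b34 b41 b51 b52 b54.
Proof.
split; first exact: local_automorphism_pi2_form.
case=> b11 [b21 [b22 [b31 [b32 [b33 [b34 [b41 [b51 [b52 [b54 [nondeg ->]]]]]]]]]]].
move: nondeg; rewrite !mulf_eq0 !negb_or.
case/andP=> /andP[/andP[/andP[nz11 nz22] nz33] nz44] nz55.
exact: pi2_form_local_automorphism.
Qed.
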